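(* Define transition probabilities $P(n\searrow m)$ on $\mathbb{N}_{\ge1}=\{2,3,4,\dots\}$ as follows. If $n$ is composite and not a prime power, set $P(n\searrow n/q)=\frac{\Lambda(q)}{\log n}$ for every divisor $q>1$ of $n$, and $P(n\searrow m)=0$ for all other $m$. If $n=p$ is prime, set $P(p\searrow p)=1$ and $P(p\searrow m)=0$ for $m\ne p$. If $n=p^k$ with $p$ prime and $k\ge2$, set $P(n\searrow n/p^j)=\frac1k$ for $j=1,\dots,k-2$, $P(n\searrow p)=\frac2k$, and $P(n\searrow m)=0$ for all other $m$. Let $\nu_0(n)=\frac{1}{n\log n}$. Then for every $m\in\mathbb{N}_{\ge1}$, $$\sum_{q>1}\nu_0(mq)\,P(mq\searrow m)\le\nu_0(m).$$
   Context: $\Lambda$ is the von Mangoldt function: $\Lambda(q)=\log p$ if $q=p^j$ for a prime $p$ and $j\ge1$, and $\Lambda(q)=0$ otherwise. The sum is over integers $q\ge2$. *)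

From HB Require Import structures.
From mathcomp Require Import all_boot all_order all_algebra.
From mathcomp Require Import all_classical all_reals all_analysis.
Set Implicit Arguments. Unset Strict Implicit. Unset Printing Implicit Defensive.
Import Order.TTheory GRing.Theory Num.Theory.
Local Open Scope ring_scope.

(* von Mangoldt: Lambda q = log p if q = p^j (p prime, j >= 1), else 0.
   Written as a sum over all pairs (p, j) with p <= q, 1 <= j <= q, q = p^j;
   at most one such pair exists, so this is literally the definition. *)
Definition vonMangoldt (R : realType) (q : nat) : R :=
  \sum_(p < q.+1 | prime p) \sum_(1 <= j < q.+1 | q == (p ^ j)%N) ln (p%:R : R).

Definition is_ppow2 (n : nat) : bool :=
  [exists p : 'I_n.+1, [exists k : 'I_n.+1, prime p && (1 < k)%N && (n == p ^ k)%N]].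

Definition trans (R : realType) (n m : nat) : R :=
  if prime n then (m == n)%:R
  else if is_ppow2 n then
    let p := pdiv n in let k := logn p n in
    if m == p then 2 / k%:R
    else if has (fun j => m == n %/ p ^ j)%N (iota 1 (k - 2)) then 1 / k%:R
    else 0
  else
    \sum_(2 <= q < n.+1 | (q %| n)%N && (m == n %/ q)%N) vonMangoldt R q / ln (n%:R : R).

Definition nu0 (R : realType) (n : nat) : R := 1 / (n%:R * ln (n%:R : R)).

(** Write L = ln m and w(x) = L / (L + ln x)^2. The generic term
    nu0(mq) Lambda(q) / ln(mq) = nu0(m) Lambda(q) w(q) / q equals nu0(mq) P(mq \searrow m)
    unless mq is a prime power, where it still bounds it, except that P doubles when m is
    prime and q a power of m.
    As w decreases convexly along the integers, w(d)/d is dominated by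
    sum_k (w(dk) - w(dk+1)); summing against Lambda and using sum_{d | n} Lambda(d) = ln n
    turns sum_q Lambda(q) w(q)/q into sum_n (w(n) - w(n+1)) ln n, which Abel summation
    bounds by 1 - (ln 2)^2 / (L + ln 2)^2. The extra mass of the powers q = m^j is
    sum_j 1 / ((j+1)^2 m^j) <= 1 / (4(m-1)), and this is at most (ln 2)^2 / (L + ln 2)^2
    because (ln m + ln 2)^2 <= 4 (ln 2)^2 (m - 1). *)

From HB Require Import structures.
From mathcomp Require Import all_boot all_order all_algebra.
From mathcomp Require Import all_classical all_reals all_analysis.
From mathcomp Require Import ring lra.
Import Order.TTheory GRing.Theory Num.Theory.
Set Implicit Arguments. Unset Strict Implicit. Unset Printing Implicit Defensive.
Local Open Scope ring_scope.

Section LnFacts.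
Variable R : realType.
Implicit Types x y : R.

Lemma ln_le_subr1 x : 0 < x -> ln x <= x - 1.
Proof. by move=> x0; have := @le_ln1Dx R (x - 1); rewrite addrCA subrr addr0; apply; lra. Qed.

Lemma ln_nat_ge0 n : 0 <= ln (n%:R : R).
Proof. by case: n => [|n]; [rewrite ln0 | rewrite ln_ge0 // ler1n]. Qed.

Lemma ln_nat_gt0 n : (1 < n)%N -> 0 < ln (n%:R : R).
Proof. by move=> n1; rewrite ln_gt0 // ltr1n. Qed.

Lemma ln_le x y : 0 < x -> x <= y -> ln x <= ln y.
Proof. by move=> x0 xy; rewrite ler_ln ?posrE // (lt_le_trans x0). Qed.

Lemma ln_succ_sub_le x y : 0 < x -> x <= y -> ln (y + 1) - ln y <= ln (x + 1) - ln x.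
Proof.
move=> x0 xy; have y0 : 0 < y by lra.
rewrite -!ln_div ?posrE ?addr_gt0 //; apply: ln_le; first by rewrite divr_gt0 // addr_gt0.
by rewrite !mulrDl !divff ?gt_eqF // lerD2l !mul1r lef_pV2 ?posrE.
Qed.

Lemma ln_addn_sub_le x (D : nat) : 0 < x ->
  ln (x + D%:R) - ln x <= D%:R * (ln (x + 1) - ln x).
Proof.
move=> x0; elim: D => [|D IH]; first by rewrite addr0 subrr mul0r.
have := @ln_succ_sub_le x (x + D%:R) x0; rewrite lerDl ler0n -natr1 addrA => /(_ isT).
lra.
Qed.

End LnFacts.

Section Ln2.
Variable R : realType.
Local Notation c := (ln (2 : R)).

Lemma ln2_bounds : 1 / 2 <= c <= 1.
Proof.
have h1 : c <= 2 - 1 by apply: ln_le_subr1.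
have h2 : ln (2^-1 : R) <= 2^-1 - 1 by apply: ln_le_subr1; rewrite invr_gt0.
by rewrite lnV ?posrE // in h2; apply/andP; split; lra.
Qed.

Lemma ln_le_tangent4 (x : R) : 0 < x -> ln x <= 2 * c + (x - 4) / 4.
Proof.
move=> x0; have := @ln_le_subr1 R (x / 4); rewrite divr_gt0 // => /(_ isT).
have -> : (4 : R) = 2 * 2 by rewrite -natrM.
rewrite ln_div ?posrE ?mulr_gt0 // lnM ?posrE //; lra.
Qed.

Lemma sqr_ln_add_ln2_succ (x : R) : 3 <= x ->
  (ln (x + 1) + c) ^+ 2 <= (ln x + c) ^+ 2 + 4 * c ^+ 2.
Proof.
move=> x3; have x0 : 0 < x by lra.
have /andP[c_ge c_le] := ln2_bounds.
have lnx_ge0 : 0 <= ln x by rewrite ln_ge0 //; lra.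
have lnxS : ln x <= ln (x + 1) by apply: ln_le; lra.
have lnS_sub : (ln (x + 1) - ln x) * x <= 1.
  rewrite -ln_div ?posrE ?addr_gt0 // -ler_pdivlMr // div1r.
  apply: (le_trans (ln_le_subr1 _)); rewrite ?divr_gt0 ?addr_gt0 //.
  by rewrite mulrDl divff ?gt_eqF // [1 + _]addrC addrK div1r.
have lnS_le : ln (x + 1) <= 2 * c + (x - 3) / 4 by have := @ln_le_tangent4 (x + 1); lra.
have sum_le : ln (x + 1) + ln x + 2 * c <= 4 * c ^+ 2 * x.
  have p1 : 0 <= (x - 3) * (4 * c ^+ 2 - 1 / 2) by apply: mulr_ge0; nra.
  have p2 : 0 <= c * (2 * c - 1) by apply: mulr_ge0; lra.
  nra.
have -> : (ln (x + 1) + c) ^+ 2 =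
    (ln x + c) ^+ 2 + (ln (x + 1) - ln x) * (ln (x + 1) + ln x + 2 * c) by ring.
rewrite lerD2l; nra.
Qed.

Lemma sqr_ln_add_ln2_le n : (2 <= n)%N -> (ln n%:R + c) ^+ 2 <= 4 * c ^+ 2 * (n%:R - 1).
Proof.
have /andP[c_ge c_le] := ln2_bounds.
case: n => [|[|[|k]]] // _.
  by rewrite le_eqVlt; apply/predU1l; ring.
elim: k => [|k IH].
  have := @ln_le_tangent4 3 (ltr0Sn R 2); rewrite (_ : 3%:R - 1 = 2 :> R) ?mulrA; last by ring.
  have ln3_ge0 := @ln_nat_ge0 R 3; nra.
have := @sqr_ln_add_ln2_succ k.+3%:R; rewrite ler_nat natr1 => /(_ isT) step.
by apply: (le_trans step); rewrite -natr1 in IH *; lra.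
Qed.

End Ln2.

Section Weight.
Variables (R : realType) (L : R).
Hypothesis L_gt0 : 0 < L.

Definition weight (x : R) : R := L / (L + ln x) ^+ 2.

(* Convexity of u |-> (L + u)^-2: [s y] below is minus the slope of the chord over [a, y],
   and it decreases in y. *)
Lemma inv_sqr_chord (a b e t : R) : 0 <= a -> a <= b -> b <= e -> 0 <= t ->
  e - a <= t * (b - a) -> (L + a) ^- 2 - (L + e) ^- 2 <= t * ((L + a) ^- 2 - (L + b) ^- 2).
Proof.
move=> a0 ab be t0 eab.
have [La Lb Le] : [/\ 0 < L + a, 0 < L + b & 0 < L + e] by have := L_gt0; split; lra.
pose s y := ((L + a)^-1 + (L + y)^-1) / ((L + a) * (L + y)).
have sE y : 0 < L + y -> (L + a) ^- 2 - (L + y) ^- 2 = (y - a) * s y.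
  by move=> Ly; rewrite /s; field; rewrite !gt_eqF.
have s_ge0 : 0 <= s e by rewrite divr_ge0 ?addr_ge0 ?invr_ge0 ?mulr_ge0 ?ltW.
have s_le : s e <= s b.
  apply: ler_pM.
  - by rewrite addr_ge0 // invr_ge0 ltW.
  - by rewrite invr_ge0 mulr_ge0 // ltW.
  - by rewrite lerD2l lef_pV2 ?posrE // lerD2l.
  - by rewrite lef_pV2 ?posrE ?mulr_gt0 // ler_pM2l // lerD2l.
rewrite sE // sE //; apply: (le_trans (ler_wpM2r s_ge0 eab)).
by rewrite -mulrA ler_wpM2l // ler_wpM2l // subr_ge0.
Qed.

Lemma weight_le x y : 1 <= x -> x <= y -> weight y <= weight x.
Proof.
move=> x1 xy; have L0 := L_gt0; have lnx := ln_ge0 x1.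
have lnxy := ln_le (lt_le_trans ltr01 x1) xy.
by rewrite ler_pM2l // lef_pV2 ?posrE ?exprn_gt0 ?lerXn2r ?nnegrE; lra.
Qed.

Lemma weight_step x (D : nat) : 1 <= x ->
  weight x - weight (x + D%:R) <= D%:R * (weight x - weight (x + 1)).
Proof.
move=> x1; case: D => [|D]; first by rewrite addr0 subrr mul0r.
have x0 : 0 < x by lra.
have lnx := ln_ge0 x1.
have lnx1 : ln x <= ln (x + 1) by apply: ln_le; lra.
have lnxD : ln (x + 1) <= ln (x + D.+1%:R) by apply: ln_le; rewrite ?lerD2l ?ler1n //; lra.
have := inv_sqr_chord lnx lnx1 lnxD (ler0n _ D.+1) (ln_addn_sub_le D.+1 x0).
by rewrite /weight -!mulrBr mulrCA ler_pM2l.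
Qed.

Lemma weight_div_le (d K : nat) : (0 < d)%N ->
  weight d%:R / d%:R <=
  \sum_(1 <= k < K.+1) (weight (d * k)%:R - weight (d * k).+1%:R) + weight (d * K.+1)%:R / d%:R.
Proof.
move=> d0; have dR : 0 < d%:R :> R by rewrite ltr0n.
elim: K => [|K IH]; first by rewrite big_geq // add0r muln1.
rewrite big_nat_recr //= -addrA; apply: (le_trans IH); rewrite lerD2l.
have := @weight_step (d * K.+1)%:R d; rewrite ler1n muln_gt0 d0 natr1 -natrD -mulnSr.
by move=> /(_ isT); rewrite -lerBlDr -mulrBl ler_pdivrMr // mulrC.
Qed.

Lemma div_shift_sub_ge a b : 0 <= a -> a <= b ->
  L / (L + b) ^+ 2 * (b - a) <= L / (L + a) - L / (L + b).
Proof.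
move=> a0 ab; have L0 := L_gt0.
have [La Lb] : 0 < L + a /\ 0 < L + b by split; lra.
have -> : L / (L + a) - L / (L + b) = L * (b - a) / ((L + a) * (L + b)).
  by field; rewrite !gt_eqF.
rewrite mulrAC; apply: ler_wpM2l; first by rewrite mulr_ge0 ?subr_ge0 // ltW.
by rewrite lef_pV2 ?posrE ?mulr_gt0 ?exprn_gt0 // expr2 ler_pM2r // lerD2l.
Qed.

Lemma weight_abel_le (X : nat) : (2 <= X)%N ->
  \sum_(2 <= n < X.+1) (weight n%:R - weight n.+1%:R) * ln n%:R + weight X.+1%:R * ln X%:R
  <= 1 - ln 2 ^+ 2 / (L + ln 2) ^+ 2 - L / (L + ln X%:R).
Proof.
have L0 := L_gt0; have c0 : 0 < ln (2 : R) by rewrite ln_gt0 ?ltr1n.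
case: X => [|[|k]] // _; elim: k => [|k IH].
  rewrite big_nat1 /weight le_eqVlt; apply/predU1l; field.
  by rewrite !gt_eqF // addr_gt0 // ln_gt0 // ltr1n.
rewrite big_nat_recr //=.
have := @div_shift_sub_ge (ln k.+2%:R) (ln k.+3%:R) (ln_nat_ge0 _ _).
rewrite ln_le ?ltr0n ?ler_nat // => /(_ isT).
rewrite /weight in IH *; lra.
Qed.

End Weight.

Section Sums.
Variable R : realType.

Lemma ler_sum_nat_widen (F : nat -> R) m1 m2 n1 n2 : (m2 <= m1)%N -> (n1 <= n2)%N ->
  (forall i, (m2 <= i < n2)%N -> 0 <= F i) ->
  \sum_(m1 <= i < n1) F i <= \sum_(m2 <= i < n2) F i.
Proof.
move=> m21 n12 F0.
have sum_ge0 a b : (m2 <= a)%N -> (b <= n2)%N -> 0 <= \sum_(a <= i < b) F i.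
  move=> m2a bn2; rewrite big_nat_cond; apply: sumr_ge0 => i /andP[/andP[ai ib] _].
  by apply: F0; rewrite (leq_trans m2a ai) (leq_trans ib bn2).
case: (leqP n1 m1) => [nm | mn]; first by rewrite big_geq // sum_ge0.
have m1n2 := leq_trans (ltnW mn) n12; have m2n1 := leq_trans m21 (ltnW mn).
rewrite (big_cat_nat m21 m1n2) (big_cat_nat (ltnW mn) n12) /=.
by rewrite addrCA lerDl addr_ge0 ?sum_ge0.
Qed.

Lemma sum_multiples (F : nat -> R) d X : (0 < d)%N ->
  \sum_(1 <= k < (X %/ d).+1) F (d * k)%N = \sum_(1 <= n < X.+1 | (d %| n)%N) F n.
Proof.
move=> d0; elim: X => [|X IH]; first by rewrite div0n !big_geq.
rewrite (divnS _ d0) [RHS]big_mkcond big_nat_recr //= -big_mkcond -IH.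
case: ifP => dX /=; last by rewrite addr0.
rewrite add1n big_nat_recr //=; congr (_ + F _).
by rewrite -[in RHS](divnK dX) (divnS _ d0) dX mulnC.
Qed.

End Sums.

Section VonMangoldt.
Variable R : realType.

Lemma ln_prod_nat (I : Type) (r : seq I) (P : pred I) (F : I -> nat) :
  (forall i, P i -> (0 < F i)%N) ->
  ln (\prod_(i <- r | P i) F i)%:R = \sum_(i <- r | P i) ln (F i)%:R :> R.
Proof.
move=> F_gt0; elim: r => [|i r IH]; first by rewrite !big_nil ln1.
rewrite !big_cons; case: ifP => // Pi.
by rewrite natrM lnM ?IH // posrE ltr0n ?F_gt0 // prodn_cond_gt0.
Qed.

Lemma ln_nat_logn n N : (0 < n)%N -> (n <= N)%N ->
  ln n%:R = \sum_(0 <= p < N.+1 | prime p) ln p%:R *+ logn p n :> R.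
Proof.
move=> n0 nN; rewrite -{1}(partnT n0) (widen_partn _ nN) ln_prod_nat; last first.
  by move=> [|p] _; rewrite expn_gt0 // lognE.
rewrite big_mkcond [RHS]big_mkcond; apply: eq_bigr => p _ /=.
have [pp | npp] := boolP (prime p); first by rewrite natrX lnXn // ltr0n prime_gt0.
by rewrite lognE (negPf npp) ln1.
Qed.

Lemma vonMangoldt_ge0 q : 0 <= vonMangoldt R q.
Proof. by apply: sumr_ge0 => p _; apply: sumr_ge0 => j _; rewrite ln_nat_ge0. Qed.

Lemma vonMangoldtE q N : (q <= N)%N ->
  vonMangoldt R q = \sum_(0 <= p < N.+1 | prime p) \sum_(1 <= j < N.+1 | q == (p ^ j)%N) ln p%:R.
Proof.
move=> qN; rewrite /vonMangoldt -(big_mkord (fun p => prime p)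
  (fun p => \sum_(1 <= j < q.+1 | q == (p ^ j)%N) ln (p%:R : R))) (big_nat_widen _ _ N.+1) //.
rewrite [RHS](bigID (fun p => p < q.+1)%N) /= [X in _ = _ + X]big1 ?addr0.
  apply: eq_bigr => p /andP[pp _]; rewrite (big_nat_widen _ _ N.+1) //.
  by apply: eq_bigl => j; case: eqP => //= ->; rewrite ltnS ltnW // ltn_expl // prime_gt1.
move=> p /andP[pp]; rewrite -leqNgt => qp; apply: big1_seq => j /andP[/eqP qE].
rewrite mem_index_iota => /andP[j1 _].
have := leq_pexp2l (prime_gt0 pp) j1; rewrite expn1 -qE => pq.
by rewrite ltnNge pq in qp.
Qed.

Lemma vonMangoldt_pow p j : prime p -> (0 < j)%N -> vonMangoldt R (p ^ j) = ln p%:R.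
Proof.
move=> pp j0; have p1 := prime_gt1 pp.
rewrite (vonMangoldtE (leqnn _)).
rewrite (eq_bigr (fun p' => if p' == p then ln p%:R else 0)); last first.
  move=> p' pp'; case: eqP => [-> | /eqP p'p].
    under eq_bigl => j' do rewrite eq_sym eqn_exp2l //.
    by rewrite big_nat1_eq j0 ltnS ltnW // ltn_expl.
  apply: big1_seq => j' /andP[/eqP pjE]; rewrite mem_index_iota => /andP[j'0 _].
  have : (p' %| p ^ j)%N by rewrite pjE dvdn_exp.
  by rewrite Euclid_dvdX // dvdn_prime2 // (negPf p'p).
rewrite -big_mkcondr big_nat1_cond_eq pp andbT /=.
by rewrite ltnS -{1}(expn1 p) leq_pexp2l // ltnW.
Qed.

Lemma sum_dvd_vonMangoldt n N : (0 < n)%N -> (n <= N)%N ->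
  \sum_(0 <= d < N.+1 | (d %| n)%N) vonMangoldt R d = ln n%:R.
Proof.
move=> n0 nN; rewrite (ln_nat_logn n0 nN).
transitivity (\sum_(0 <= d < N.+1 | (d %| n)%N) \sum_(0 <= p < N.+1 | prime p)
    \sum_(1 <= j < N.+1) (if d == (p ^ j)%N then ln p%:R else 0 : R)).
  apply: eq_bigr => d dn; rewrite (vonMangoldtE (leq_trans (dvdn_leq n0 dn) nN)).
  by apply: eq_bigr => p _; rewrite big_mkcond.
rewrite exchange_big_nat /=; apply: eq_bigr => p pp; rewrite exchange_big_nat /=.
rewrite (eq_bigr (fun j => if (j <= logn p n)%N then ln p%:R else 0)); last first.
  move=> j _; rewrite -big_mkcondr big_nat1_cond_eq (pfactor_dvdn _ pp n0) andbC.
  case: (leqP j (logn p n)) => jlog //=; rewrite ltnS (leq_trans _ nN) // dvdn_leq //.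
  by rewrite pfactor_dvdn.
have logN : (logn p n <= N)%N := leq_trans (ltnW (ltn_logl p n0)) nN.
have -> : ln p%:R *+ logn p n = \sum_(1 <= i < (logn p n).+1) ln p%:R :> R.
  by rewrite sumr_const_nat subn1.
by rewrite [RHS](big_nat_widen _ _ N.+1) // [RHS]big_mkcond.
Qed.

Lemma sum_vonMangoldt_multiples (g : nat -> R) X :
  \sum_(1 <= d < X.+1) vonMangoldt R d * \sum_(1 <= k < (X %/ d).+1) g (d * k)%N
  = \sum_(1 <= n < X.+1) g n * ln n%:R.
Proof.
transitivity (\sum_(1 <= d < X.+1) \sum_(1 <= n < X.+1)
    (if (d %| n)%N then vonMangoldt R d * g n else 0)).
  by apply: eq_big_nat => d /andP[d0 _]; rewrite sum_multiples // mulr_sumr big_mkcond.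
rewrite exchange_big_nat /=; apply: eq_big_nat => n /andP[n0 nX].
rewrite -big_mkcond /= -mulr_suml mulrC; congr (_ * _).
by rewrite -(sum_dvd_vonMangoldt n0 nX) [RHS]big_ltn_cond //= dvd0n gtn_eqF.
Qed.

End VonMangoldt.

Section ChebyshevBound.
Variables (R : realType) (L : R).
Hypothesis L_gt0 : 0 < L.

Lemma sum_vonMangoldt_weight_le N :
  \sum_(2 <= d < N.+1) vonMangoldt R d * (weight L d%:R / d%:R)
  <= 1 - ln 2 ^+ 2 / (L + ln 2) ^+ 2.
Proof.
set C := \sum_(2 <= d < N.+1) vonMangoldt R d / d%:R.
have C_ge0 : 0 <= C by apply: sumr_ge0 => d _; rewrite divr_ge0 ?vonMangoldt_ge0.
(* Cut the sums at an X with ln X >= C: the tail C * weight X is then at most L / (L + ln X). *)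
pose X := (N + Num.truncn (expR C)).+2.
have NX : (N <= X)%N by rewrite leqW // leqW // leq_addr.
have C_le : C <= ln X%:R.
  rewrite -[C]expRK ln_le ?expR_gt0 // ltW // (lt_le_trans (truncnS_gt _)) //.
  by rewrite ler_nat ltnS leqW // leq_addl.
pose g n := weight L n%:R - weight L n.+1%:R.
have g_ge0 n : (0 < n)%N -> 0 <= g n.
  by move=> n0; rewrite subr_ge0 weight_le // ?ler1n ?ler_nat.
have step d : (2 <= d < N.+1)%N -> vonMangoldt R d * (weight L d%:R / d%:R) <=
    vonMangoldt R d * \sum_(1 <= k < (X %/ d).+1) g (d * k)%N
    + vonMangoldt R d / d%:R * weight L X%:R.
  move=> /andP[d2 _]; have d0 : (0 < d)%N := ltnW d2.
  rewrite -mulrA -mulrDr ler_wpM2l ?vonMangoldt_ge0 //.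
  apply: (le_trans (weight_div_le L_gt0 (X %/ d) d0)).
  rewrite lerD2l mulrC ler_wpM2l ?invr_ge0 ?ler0n // weight_le // ?ler1n //.
  by rewrite ler_nat mulnC ltnW // ltn_ceil.
apply: (le_trans (ler_sum_nat step)); rewrite big_split /= -mulr_suml -/C.
have multiples_le :
    \sum_(2 <= d < N.+1) vonMangoldt R d * \sum_(1 <= k < (X %/ d).+1) g (d * k)%N
    <= \sum_(2 <= n < X.+1) g n * ln n%:R.
  rewrite [X in _ <= X](_ : _ = \sum_(1 <= n < X.+1) g n * ln n%:R); last first.
    by rewrite [RHS]big_ltn // ln1 mulr0 add0r.
  rewrite -sum_vonMangoldt_multiples; apply: ler_sum_nat_widen => // d /andP[d0 _].
  rewrite mulr_ge0 ?vonMangoldt_ge0 // big_nat_cond sumr_ge0 // => k /andP[/andP[k0 _] _].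
  by rewrite g_ge0 // muln_gt0 d0.
have abel := weight_abel_le L_gt0 (isT : (2 <= X)%N).
have tail : C * weight L X%:R <= L / (L + ln X%:R).
  have La : 0 < L + ln X%:R by rewrite ltr_wpDr ?ln_nat_ge0.
  have -> : L / (L + ln X%:R) = (L + ln X%:R) * weight L X%:R.
    by rewrite /weight; field; rewrite gt_eqF.
  rewrite ler_wpM2r ?divr_ge0 ?sqr_ge0 ?ltW //; have := L_gt0; lra.
have w_ge0 : 0 <= weight L X.+1%:R * ln X%:R.
  by rewrite mulr_ge0 ?ln_nat_ge0 // divr_ge0 ?sqr_ge0 // ltW.
rewrite /g in multiples_le; lra.
Qed.

End ChebyshevBound.

Lemma prime_mulF m q : (1 < m)%N -> (1 < q)%N -> prime (m * q) = false.
Proof.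
move=> m1 q1; apply/negP => /primeP[_ /(_ m (dvdn_mulr q (dvdnn m)))].
by rewrite gtn_eqF //= -{1}(muln1 m) eqn_mul2l gtn_eqF ?(ltnW m1) // eq_sym gtn_eqF.
Qed.

Lemma is_ppow2_pow n : is_ppow2 n -> exists p k, [/\ prime p, (1 < k)%N & n = (p ^ k)%N].
Proof. by case/existsP => p /existsP[k /andP[/andP[pp k1] /eqP ->]]; exists p, k. Qed.

Section Transition.
Variable R : realType.

Lemma nu0_ge0 n : 0 <= nu0 R n.
Proof. by rewrite divr_ge0 ?mulr_ge0 ?ln_nat_ge0. Qed.

Lemma trans_ge0 n m : 0 <= trans R n m.
Proof.
rewrite /trans; case: ifP => _; first exact: ler0n.
case: ifP => _; first by case: ifP => _; [|case: ifP => _]; rewrite ?divr_ge0.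
by apply: sumr_ge0 => q _; rewrite divr_ge0 ?vonMangoldt_ge0 ?ln_nat_ge0.
Qed.

Lemma trans_mul_le m q : (1 < m)%N -> (1 < q)%N ->
  trans R (m * q) m <=
  (vonMangoldt R q / ln (m * q)%:R) *+ (prime m && (q == m ^ logn m q)%N).+1.
Proof.
move=> m1 q1; rewrite /trans prime_mulF //.
case: ifP => [/is_ppow2_pow[p [k [pp k1 mqE]]] | _]; last first.
  have w_ge0 : 0 <= vonMangoldt R q / ln (m * q)%:R.
    by rewrite divr_ge0 ?vonMangoldt_ge0 ?ln_nat_ge0.
  rewrite (eq_bigl (fun q' => q' == q)); last first.
    move=> q'; apply/andP/eqP => [[q'dvd /eqP mE] | ->]; last first.
      by rewrite dvdn_mull // mulnK // ltnW.
    apply/eqP; rewrite -(eqn_pmul2l (ltnW m1)); apply/eqP.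
    by rewrite {1}mE divnK.
  by rewrite big_nat1_eq q1 ltnS leq_pmull ?(ltnW m1) // mulrS lerDl mulrn_wge0.
(* With mq = p^(k+1) the generic term is 1/(k+1), while P(mq \searrow m) is 2/(k+1)
   for m = p and at most 1/(k+1) otherwise. *)
case: k k1 mqE => // k _ mqE; rewrite mqE pdiv_pfactor // pfactorK //.
have : (q %| p ^ k.+1)%N by rewrite -mqE dvdn_mull.
case/(dvdn_pfactor _ _ pp) => j _ qE.
have j0 : (0 < j)%N by case: j qE => // qE; rewrite qE in q1.
have -> : vonMangoldt R q / ln (p ^ k.+1)%:R = k.+1%:R^-1.
  rewrite qE vonMangoldt_pow // natrX lnXn ?ltr0n ?prime_gt0 //.
  by field; rewrite nat1r pnatr_eq0 /= gt_eqF // ln_nat_gt0 // prime_gt1.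
case: eqP => [mp | _]; first by rewrite mp pp qE pfactorK // eqxx mulr_natl.
have w_ge0 : 0 <= k.+1%:R^-1 :> R by rewrite invr_ge0.
set w := k.+1%:R^-1 in w_ge0 *.
by case: ifP => _; rewrite mulrS ?mul1r ?lerDl ?addr_ge0 ?mulrn_wge0.
Qed.

End Transition.

Section PrimePowers.
Variable R : realType.

Lemma sum_pow_le (F : nat -> R) m N : prime m -> (forall q, 0 <= F q) ->
  \sum_(2 <= q < N.+1 | q == (m ^ logn m q)%N) F q <= \sum_(1 <= j < N.+1) F (m ^ j)%N.
Proof.
move=> mp F0; have m1 := prime_gt1 mp.
have powE q : (1 < q < N.+1)%N ->
    (if q == (m ^ logn m q)%N then F q else 0) =
    \sum_(1 <= j < N.+1) (if q == (m ^ j)%N then F q else 0).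
  move=> /andP[q1 qN]; rewrite -big_mkcond; case: eqP => [qE | qNE].
    rewrite (eq_bigl (fun j => j == logn m q)) => [|j]; last first.
      by rewrite {1}qE eqn_exp2l // eq_sym.
    rewrite big_nat1_eq ltnS (leq_trans (ltnW (ltn_logl m (ltnW q1))) qN) andbT.
    by rewrite lt0n; case: eqP qE => // ->; rewrite expn0 => q1E; rewrite q1E in q1.
  by rewrite big_pred0 // => j; apply/eqP => qE; apply: qNE; rewrite {2}qE pfactorK.
rewrite big_mkcond (eq_big_nat _ _ powE) exchange_big_nat /=.
apply: ler_sum_nat => j _; rewrite -big_mkcondr /= big_nat1_eq.
by case: ifP.
Qed.

Lemma sum_inv_pow_le (x : R) n : 1 < x -> \sum_(1 <= j < n.+1) x^-1 ^+ j <= (x - 1)^-1.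
Proof.
move=> x1.
suff <- : \sum_(1 <= j < n.+1) x^-1 ^+ j + (x - 1)^-1 * x^-1 ^+ n = (x - 1)^-1.
  by rewrite lerDl mulr_ge0 ?exprn_ge0 ?invr_ge0 //; lra.
elim: n => [|n IH]; first by rewrite big_geq // add0r expr0 mulr1.
rewrite big_nat_recr //= -[RHS]IH -addrA; congr (_ + _).
by rewrite exprS; field; rewrite !gt_eqF //; lra.
Qed.

Lemma weight_ln_pow (x : R) j : 1 < x -> weight (ln x) (x ^+ j) = (j.+1%:R ^+ 2 * ln x)^-1.
Proof.
move=> x1; have lx : 0 < ln x := ln_gt0 x1.
rewrite /weight lnXn ?(lt_trans ltr01) // -mulr_natr -natr1; field.
have jx : 0 <= ln x * j%:R by rewrite mulr_ge0 // ltW.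
by rewrite natr1 pnatr_eq0 /= !gt_eqF //; lra.
Qed.

End PrimePowers.

Section PartialSums.
Variable R : realType.

Lemma nu0_mul_div_ln m q : (1 < m)%N -> (0 < q)%N ->
  nu0 R (m * q) / ln (m * q)%:R = nu0 R m * (weight (ln m%:R) q%:R / q%:R).
Proof.
move=> m1 q0; have L0 := ln_nat_gt0 R m1; have lq := ln_nat_ge0 R q.
have [m0 q0'] : 0 < m%:R :> R /\ 0 < q%:R :> R by rewrite !ltr0n ltnW.
rewrite /nu0 /weight natrM lnM ?posrE //; field.
by rewrite !gt_eqF ?mulr_gt0 // ltr_pwDl.
Qed.

Lemma sum_nu0_vonMangoldt_le m N : (1 < m)%N ->
  \sum_(2 <= q < N.+1) nu0 R (m * q) * (vonMangoldt R q / ln (m * q)%:R)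
  <= nu0 R m * (1 - ln 2 ^+ 2 / (ln m%:R + ln 2) ^+ 2).
Proof.
move=> m1; rewrite (eq_big_nat _ _ (F2 := fun q => nu0 R m *
    (vonMangoldt R q * (weight (ln m%:R) q%:R / q%:R)))); last first.
  by move=> q /andP[q2 _]; rewrite mulrCA nu0_mul_div_ln ?(ltnW q2) // mulrCA.
by rewrite -mulr_sumr ler_wpM2l ?nu0_ge0 // sum_vonMangoldt_weight_le ?ln_nat_gt0.
Qed.

Lemma nu0_mul_pow_eq m j : prime m -> (0 < j)%N ->
  nu0 R (m * m ^ j) * (vonMangoldt R (m ^ j) / ln (m * m ^ j)%:R)
  = nu0 R m * ((j.+1%:R ^+ 2)^-1 * m%:R^-1 ^+ j).
Proof.
move=> mp j0; have m1 := prime_gt1 mp; have L0 := ln_nat_gt0 R m1.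
rewrite mulrCA nu0_mul_div_ln ?expn_gt0 ?prime_gt0 // mulrCA vonMangoldt_pow //.
rewrite natrX weight_ln_pow ?ltr1n //; congr (_ * _).
by rewrite exprVn; field; rewrite nat1r pnatr_eq0 !gt_eqF ?exprn_gt0 ?ltr0n ?prime_gt0.
Qed.

Lemma sum_nu0_prime_pow_le m N : prime m ->
  \sum_(2 <= q < N.+1 | q == (m ^ logn m q)%N) nu0 R (m * q) * (vonMangoldt R q / ln (m * q)%:R)
  <= nu0 R m * (ln 2 ^+ 2 / (ln m%:R + ln 2) ^+ 2).
Proof.
move=> mp; have m1 := prime_gt1 mp; set L := ln (m%:R : R); set c := ln (2 : R).
have mR : 1 < m%:R :> R by rewrite ltr1n.
have [L0 c0] : 0 < L /\ 0 < c by rewrite !ln_gt0 ?ltr1n.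
have term_ge0 q : 0 <= nu0 R (m * q) * (vonMangoldt R q / ln (m * q)%:R).
  by rewrite mulr_ge0 ?nu0_ge0 ?divr_ge0 ?vonMangoldt_ge0 ?ln_nat_ge0.
apply: (le_trans (sum_pow_le _ mp term_ge0)).
apply: (@le_trans _ _ (\sum_(1 <= j < N.+1) nu0 R m * (4^-1 * m%:R^-1 ^+ j))).
  apply: ler_sum_nat => j /andP[j1 _]; rewrite nu0_mul_pow_eq // ler_wpM2l ?nu0_ge0 //.
  rewrite ler_wpM2r ?exprn_ge0 ?invr_ge0 ?ler0n // lef_pV2 ?posrE ?exprn_gt0 //.
  by rewrite (_ : 4 = 2 ^+ 2) ?lerXn2r ?nnegrE ?ler_nat //; ring.
rewrite -mulr_sumr ler_wpM2l ?nu0_ge0 // -mulr_sumr.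
apply: (le_trans (ler_wpM2l _ (sum_inv_pow_le _ mR))); first by rewrite invr_ge0.
have := sqr_ln_add_ln2_le R (m1 : (2 <= m)%N); rewrite -/L -/c => sqr_le.
have [Lc m1R] : 0 < L + c /\ 0 < m%:R - 1 :> R by split; lra.
rewrite -invfM -invf_div lef_pV2 ?posrE ?divr_gt0 ?mulr_gt0 ?exprn_gt0 //.
by rewrite ler_pdivrMr ?exprn_gt0 // mulrAC.
Qed.

Lemma sum_nu0_trans_le m N : (1 < m)%N ->
  \sum_(2 <= q < N.+1) nu0 R (m * q) * trans R (m * q) m <= nu0 R m.
Proof.
move=> m1; pose G q := nu0 R (m * q) * (vonMangoldt R q / ln (m * q)%:R).
have split_le : \sum_(2 <= q < N.+1) nu0 R (m * q) * trans R (m * q) m <=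
    \sum_(2 <= q < N.+1) G q + \sum_(2 <= q < N.+1 | prime m && (q == m ^ logn m q)%N) G q.
  rewrite [X in _ <= _ + X]big_mkcond -big_split; apply: ler_sum_nat => q /andP[q1 _].
  apply: (le_trans (ler_wpM2l (nu0_ge0 R _) (trans_mul_le R m1 q1))).
  by rewrite mulrnAr mulrS mulrb.
apply: (le_trans split_le); have generic_le := sum_nu0_vonMangoldt_le N m1.
have [mp | _] := boolP (prime m).
  by apply: (le_trans (lerD generic_le (sum_nu0_prime_pow_le N mp))); rewrite -mulrDr subrK mulr1.
have s_ge0 : 0 <= ln 2 ^+ 2 / (ln m%:R + ln 2) ^+ 2 :> R by rewrite divr_ge0 ?sqr_ge0.
rewrite [X in _ + X]big_pred0 // addr0 (le_trans generic_le) //.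
by rewrite ler_piMr ?nu0_ge0 // lerBlDr lerDl.
Qed.

End PartialSums.

Unset Implicit Arguments.

Theorem lemma5p1 (R : realType) (m : nat) : (1 < m)%N ->
  (\sum_(2 <= q <oo) ((nu0 R (m * q) * trans R (m * q) m)%:E) <= (nu0 R m)%:E)%E.
Proof.
move=> m1; apply: lime_le.
  by apply: is_cvg_nneseries => q _ _; rewrite lee_fin mulr_ge0 ?nu0_ge0 ?trans_ge0.
apply: nearW => n; rewrite sumEFin lee_fin.
case: n => [|N]; first by rewrite big_geq // nu0_ge0.
exact: sum_nu0_trans_le.
Qed.
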